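(* Let $\gamma$ be a generator of $\mathbb{F}_{q^m}^*$, let $\ell\in\{0,1,\dots,q-2\}$, and let $\beta_1,\dots,\beta_m\in\mathbb{F}_{q^m}$ be linearly independent over $\mathbb{F}_q$. Then the $m\times m$ matrix $M$ whose $(i,j)$ entry, for $i=0,\dots,m-1$ and $j=1,\dots,m$, is $\gamma^{\ell(1+q+\cdots+q^{i-1})}\beta_j^{q^i-1}$ (so row $i=0$ is all ones) is full rank. *)

From HB Require Import structures.
From mathcomp Require Import all_boot all_order all_algebra all_field.
Set Implicit Arguments. Unset Strict Implicit. Unset Printing Implicit Defensive.
Import GRing.Theory.
Local Open Scope ring_scope.

(* The m x m matrix of Corollary 2.17: row i (0 <= i < m), column j
   (index j : 'I_m standing for j+1), entry
   gamma^(l*(1+q+...+q^(i-1))) * beta_j^(q^i - 1). *)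
Definition cor_matrix (L : fieldType) (q m l : nat) (gamma : L)
  (beta : m.-tuple L) : 'M[L]_m :=
  \matrix_(i < m, j < m)
     (gamma ^+ (l * \sum_(k < i) q ^ k)%N * (tnth beta j) ^+ (q ^ i - 1)%N).

From HB Require Import structures.
From mathcomp Require Import all_boot all_order all_algebra all_field.
Import GRing.Theory.
Local Open Scope ring_scope.

(* Write q = #|F| and s_i = 1 + q + ... + q^(i-1).  Since every
   beta_j is nonzero, beta_j^(q^i - 1) = beta_j^(q^i) * beta_j^-1, so
     cor_matrix = diag(gamma^(l s_i))_i  *  Moore(beta)  *  diag(beta_j^-1)_j,
   where Moore(beta) = (beta_j^(q^i))_(i,j) is the Moore matrix of beta.
   The outer diagonal matrices are invertible (gamma is nonzero whenever the
   exponent l is, because 0 <= l <= q - 2 forces q > 2 and then L has a nonzero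
   element other than 1, which must be a power of gamma).  It thus suffices
   that the Moore matrix of F-linearly independent elements is invertible.
   This is the classical linearized-polynomial argument: a vector c in the left
   kernel gives the polynomial P = \sum_i c_i X^(q^i), of degree < q^m when
   nonzero; since x |-> x^(q^i) is F-linear on L, P vanishes on all q^m
   distinct F-linear combinations of the beta_j, hence P = 0 and c = 0. *)

Section MooreMatrix.

Context {F : finFieldType} {L : fieldExtType F}.
Local Notation q := #|F|.

Lemma expr_card_powD (k : nat) (x y : L) :
  (x + y) ^+ (q ^ k) = x ^+ (q ^ k) + y ^+ (q ^ k).
Proof.
have [p p_pr pcharF] := finPcharP F.
apply: exprDn_pchar.
by rewrite (card_pprimeChar pcharF) -expnM pnatX pnatE // (pchar_lalg L) pcharF.
Qed.

Lemma expr_card_powZ (k : nat) (a : F) (x : L) :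
  (a *: x) ^+ (q ^ k) = a *: x ^+ (q ^ k).
Proof.
rewrite exprZn; congr (_ *: _).
by elim: k => [|k IHk]; rewrite ?expr1 // expnSr exprM IHk expf_card.
Qed.

Lemma expr_card_pow_lincomb (m k : nat) (a : 'I_m -> F) (b : 'I_m -> L) :
  (\sum_j a j *: b j) ^+ (q ^ k) = \sum_j a j *: b j ^+ (q ^ k).
Proof.
have zero_pow : (0 : L) ^+ (q ^ k) = 0.
  by rewrite expr0n expn_eq0 (negbTE (lt0n_neq0 (ltnW (finNzRing_gt1 F)))).
rewrite (big_morph (fun x : L => x ^+ (q ^ k)) (expr_card_powD k) zero_pow).
by apply: eq_bigr => j _; apply: expr_card_powZ.
Qed.

Definition lincombs {m : nat} (beta : m.-tuple L) : seq L :=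
  [seq \sum_(j < m) a j *: beta`_j | a : {ffun 'I_m -> F} <- enum {ffun 'I_m -> F}].

Lemma size_lincombs {m : nat} (beta : m.-tuple L) :
  size (lincombs beta) = (q ^ m)%N.
Proof. by rewrite size_map -cardE card_ffun card_ord. Qed.

Lemma uniq_lincombs {m : nat} {beta : m.-tuple L} :
  free beta -> uniq (lincombs beta).
Proof.
move=> /freeP beta_free; rewrite map_inj_uniq ?enum_uniq // => a b eq_ab.
apply/ffunP => j; apply/eqP; rewrite -subr_eq0; apply/eqP.
apply: (beta_free (fun j => a j - b j)).
by rewrite (eq_bigr _ (fun j _ => scalerBl _ _ _)) sumrB eq_ab subrr.
Qed.

(* Key step: if \sum_i c_i beta_j^(q^i) = 0 for every j, the linearized
   polynomial \sum_i c_i X^(q^i) has the q^m roots [lincombs beta] but degree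
   at most q^(m-1), so it is zero. *)
Lemma moore_left_kernel {m : nat} {beta : m.-tuple L} (c : 'I_m -> L) :
  free beta ->
  (forall j : 'I_m, \sum_(i < m) c i * beta`_j ^+ (q ^ i) = 0) ->
  forall i, c i = 0.
Proof.
move=> beta_free c_ker i0; apply/eqP; apply: contraT => c_i0_neq0.
have q_gt1 : (1 < q)%N := finNzRing_gt1 F.
have m_gt0 : (0 < m)%N by apply: leq_ltn_trans (ltn_ord i0).
pose P : {poly L} := \sum_(i < m) c i *: 'X^(q ^ i).
have coefP (k : nat) : P`_k = \sum_(i < m | (q ^ i == k)%N) c i.
  rewrite /P coef_sum [RHS]big_mkcond /=; apply: eq_bigr => i _.
  by rewrite coefZ coefXn eq_sym; case: (_ == _); rewrite ?mulr1 ?mulr0.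
have P_neq0 : P != 0.
  apply: contraNneq c_i0_neq0 => P0; have := coefP (q ^ i0)%N.
  rewrite P0 coef0 (big_pred1 i0) => [->|i]; first by rewrite eqxx.
  by rewrite /= eqn_exp2l.
have size_P : (size P <= (q ^ m.-1).+1)%N.
  apply/leq_sizeP => k lt_k; rewrite coefP big_pred0 // => i.
  apply/negbTE/eqP => eq_k; move: lt_k.
  by rewrite -eq_k ltn_exp2l // ltnNge -ltnS prednK ?ltn_ord.
(* P is F-linear as a function, so it vanishes on the span of the roots beta_j. *)
have roots_P : all (root P) (lincombs beta).
  apply/allP => _ /mapP [a _ ->]; rewrite rootE /P horner_sum.
  under eq_bigr => i _ do rewrite hornerZ hornerXn expr_card_pow_lincomb mulr_sumr.
  rewrite exchange_big /= big1 // => j _.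
  under eq_bigr => i _ do rewrite -scalerAr.
  by rewrite -scaler_sumr c_ker scaler0.
have := leq_trans (max_poly_roots P_neq0 roots_P (uniq_lincombs beta_free)) size_P.
by rewrite size_lincombs ltnS leq_exp2l // -ltnS prednK // ltnn.
Qed.

Definition moore_matrix {m : nat} (beta : m.-tuple L) : 'M[L]_m :=
  \matrix_(i < m, j < m) tnth beta j ^+ (q ^ i).

Lemma moore_matrix_unit {m : nat} (beta : m.-tuple L) :
  free beta -> moore_matrix beta \in unitmx.
Proof.
move=> beta_free; rewrite -row_free_unit -kermx_eq0.
apply/rowV0P => v /sub_kermxP v_ker; apply/rowP => i; rewrite mxE.
apply: (moore_left_kernel (v 0) beta_free) => j.
transitivity ((v *m moore_matrix beta) 0 j); last by rewrite v_ker mxE.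
by rewrite mxE; apply: eq_bigr => k _; rewrite mxE (tnth_nth 0).
Qed.

End MooreMatrix.

Lemma exists_neq01 (F : finFieldType) :
  (2 < #|F|)%N -> exists a : F, (a != 0) && (a != 1).
Proof.
move=> card_gt2; apply/existsP; apply: contraTT card_gt2.
rewrite negb_exists -leqNgt => /forallP not01.
have cover01 : [set: F] \subset [set 0; 1].
  by apply/subsetP => x _; move: (not01 x); rewrite !inE negb_and !negbK.
rewrite -cardsT (leq_trans (subset_leq_card cover01)) // cards2.
by case: (_ != _).
Qed.

Lemma generator_neq0 (L : fieldType) (gamma x : L) :
  (forall y : L, y != 0 -> exists k : nat, y = gamma ^+ k) ->
  x != 0 -> x != 1 -> gamma != 0.
Proof.
move=> gen x_neq0 x_neq1; apply/eqP => gamma0.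
have [[|k] x_eq] := gen x x_neq0.
- by rewrite x_eq expr0 eqxx in x_neq1.
- by rewrite x_eq gamma0 expr0n eqxx in x_neq0.
Qed.

Lemma cor_matrix_moore {F : finFieldType} {L : fieldExtType F} {m : nat}
    (l : nat) (gamma : L) {beta : m.-tuple L} :
  (forall j, tnth beta j != 0) ->
  cor_matrix #|F| l gamma beta =
    diag_mx (\row_(i < m) gamma ^+ (l * \sum_(k < i) #|F| ^ k)%N)
      *m moore_matrix beta *m diag_mx (\row_(j < m) (tnth beta j)^-1).
Proof.
move=> beta_neq0; rewrite mul_mx_diag mul_diag_mx; apply/matrixP => i j.
have q_pow_gt0 : (0 < #|F| ^ i)%N by rewrite expn_gt0 (ltnW (finNzRing_gt1 F)).
rewrite !mxE -mulrA; congr (_ * _).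
by rewrite -[in RHS](subnK q_pow_gt0) exprD expr1 mulfK.
Qed.

Theorem corollary2p17 (F : finFieldType) (L : fieldExtType F) (m : nat)
  (hdim : \dim (fullv : {vspace L}) = m)
  (gamma : L) (hgen : forall x : L, x != 0 -> exists k : nat, x = gamma ^+ k)
  (l : nat) (hl : (l <= #|F| - 2)%N)
  (beta : m.-tuple L) (hfree : free beta) :
  \rank (cor_matrix #|F| l gamma beta) = m.
Proof.
have beta_neq0 j : tnth beta j != 0 := free_not0 hfree (mem_tnth j beta).
have gamma_pow_neq0 (n : nat) : gamma ^+ (l * n)%N != 0.
  case: l hl => [|l'] hl'; first by rewrite mul0n expr0 oner_eq0.
  have [a /andP [a_neq0 a_neq1]] : exists a : F, (a != 0) && (a != 1).
    by apply: exists_neq01; rewrite -subn_gt0 (leq_ltn_trans _ hl').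
  rewrite expf_neq0 // (@generator_neq0 _ _ a%:A) //.
    by rewrite -in_algE fmorph_eq0.
  by rewrite -in_algE fmorph_eq1.
apply: mxrank_unit; rewrite (cor_matrix_moore l gamma beta_neq0) !unitmx_mul.
rewrite moore_matrix_unit // andbT !unitmxE !det_diag !unitfE.
by apply/andP; split; apply/prodf_neq0 => i _; rewrite mxE ?invr_eq0.
Qed.
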